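(* There is a formula $\phi_{\in}(X_l,X_r,Z)$ in the signature of $\mathcal{W}(I)$ such that for every $i\in I$ and every $A\in\mathcal{P}_{\mathrm{fci}}(I)$, $$i\in A \iff \mathcal{W}(I)\models\phi_{\in}(l(A),r(A),\{i\}).$$
   Context: Let $I$ be a dense linear order with left endpoint $0$ and no right endpoint. Let $\mathcal{P}_{\mathrm{fci}}(I)$ be the set of finite unions of closed intervals $[i,j]$, $[i,+\infty)$, $(-\infty,j]$ of $I$. For $A\in\mathcal{P}_{\mathrm{fci}}(I)$, $l(A)$ and $r(A)$ are the finite sets of left and right endpoints of $A$. Left endpoints are the minima of the maximal closed intervals composing $A$, and right endpoints are the maxima of the bounded ones. $\mathcal{W}(I)$ has universe the finite subsets of $I$ and signature $\{\cup,\cap,\bot,c_0,\min,\max,\mathrm{ips}\}$, interpreted as follows. - $\cup$ and $\cap$ are union and intersection. - $\bot$ is $\emptyset$, and $c_0$ is $\{0\}$. - $\min$ and $\max$ send a nonempty set to the singleton of its minimum, respectively maximum, and fix $\emptyset$. - $\mathrm{ips}(A,B)=\{i\in A: s_A(i)\in B\}$, where $s_A$ is the successor function of $A$. *)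

From HB Require Import structures.
From mathcomp Require Import all_boot all_order.
From mathcomp Require Import finmap.
Set Implicit Arguments. Unset Strict Implicit. Unset Printing Implicit Defensive.
Import Order.TTheory.
Local Open Scope order_scope.
Local Open Scope fset_scope.

Section W.
Context {d : Order.disp_t} {T : orderType d}.

Inductive cinterval :=
  | CBnd of T & T
  | CRayR of T
  | CRayL of T.

Definition cinterval_mem (J : cinterval) (x : T) : Prop :=
  match J with
  | CBnd i j => i <= x /\ x <= j
  | CRayR i => i <= x
  | CRayL j => x <= j
  end.

Fixpoint in_list (J : cinterval) (s : seq cinterval) : Prop :=
  match s with [::] => False | K :: s' => J = K \/ in_list J s' end.

Definition is_fci (A : T -> Prop) : Prop :=
  exists s : seq cinterval, forall x, A x <-> exists2 J, in_list J s & cinterval_mem J x.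

Definition convex_set (C : T -> Prop) : Prop :=
  forall a b c, C a -> C b -> a <= c -> c <= b -> C c.

(* C is a maximal (nonempty) convex subset of A, i.e. one of the maximal
   closed intervals composing A *)
Definition max_component (A C : T -> Prop) : Prop :=
  [/\ exists x, C x,
      (forall x, C x -> A x),
      convex_set C &
      forall C' : T -> Prop, (forall x, C x -> C' x) -> (forall x, C' x -> A x) ->
        convex_set C' -> forall x, C' x -> C x].

Definition left_endpoint (A : T -> Prop) (x : T) : Prop :=
  exists C, [/\ max_component A C, C x & forall y, C y -> x <= y].

Definition right_endpoint (A : T -> Prop) (x : T) : Prop :=
  exists C, [/\ max_component A C, C x & forall y, C y -> y <= x].

Definition wmin (A : {fset T}) : {fset T} := [fset x in A | all (fun y => x <= y) A].
Definition wmax (A : {fset T}) : {fset T} := [fset x in A | all (fun y => y <= x) A].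

Definition succ_in (A : {fset T}) (x y : T) : bool :=
  [&& y \in A, x < y & all (fun z => ~~ ((x < z) && (z < y))) A].

Definition wips (A B : {fset T}) : {fset T} :=
  [fset x in A | has (fun y => succ_in A x y) B].

End W.

Inductive wterm :=
  | TVar of nat
  | TCup of wterm & wterm
  | TCap of wterm & wterm
  | TBot
  | TC0
  | TMin of wterm
  | TMax of wterm
  | TIps of wterm & wterm.

Inductive wform :=
  | FEq of wterm & wterm
  | FFalse
  | FNot of wform
  | FAnd of wform & wform
  | FOr of wform & wform
  | FImp of wform & wform
  | FEx of nat & wform
  | FAll of nat & wform.

Fixpoint term_vars_in (P : nat -> bool) (t : wterm) : bool :=
  match t with
  | TVar n => P n
  | TCup a b | TCap a b | TIps a b => term_vars_in P a && term_vars_in P b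
  | TBot | TC0 => true
  | TMin a | TMax a => term_vars_in P a
  end.

Fixpoint form_fv_in (P : nat -> bool) (f : wform) : bool :=
  match f with
  | FEq a b => term_vars_in P a && term_vars_in P b
  | FFalse => true
  | FNot g => form_fv_in P g
  | FAnd g h | FOr g h | FImp g h => form_fv_in P g && form_fv_in P h
  | FEx n g | FAll n g => form_fv_in (fun m => (m == n) || P m) g
  end.

Section Sem.
Context {d : Order.disp_t} {T : orderType d} (zero : T).

Fixpoint weval (e : nat -> {fset T}) (t : wterm) : {fset T} :=
  match t with
  | TVar n => e n
  | TCup a b => weval e a `|` weval e b
  | TCap a b => weval e a `&` weval e b
  | TBot => fset0
  | TC0 => [fset zero]
  | TMin a => wmin (weval e a)
  | TMax a => wmax (weval e a)
  | TIps a b => wips (weval e a) (weval e b)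
  end.

Definition upd (e : nat -> {fset T}) (n : nat) (X : {fset T}) : nat -> {fset T} :=
  fun m => if m == n then X else e m.

Fixpoint wsat (e : nat -> {fset T}) (f : wform) : Prop :=
  match f with
  | FEq a b => weval e a = weval e b
  | FFalse => False
  | FNot g => ~ wsat e g
  | FAnd g h => wsat e g /\ wsat e h
  | FOr g h => wsat e g \/ wsat e h
  | FImp g h => wsat e g -> wsat e h
  | FEx n g => exists X : {fset T}, wsat (upd e n X) g
  | FAll n g => forall X : {fset T}, wsat (upd e n X) g
  end.

End Sem.

(* valuation X_l := 0, X_r := 1, Z := 2 *)
Definition env3 {d : Order.disp_t} {T : orderType d} (L R Z : {fset T}) : nat -> {fset T} :=
  fun n => match n with 0 => L | 1 => R | _ => Z end.

From HB Require Import structures.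
From mathcomp Require Import all_boot all_order.
From mathcomp Require Import finmap.
From Stdlib Require Import Classical.
Set Implicit Arguments. Unset Strict Implicit. Unset Printing Implicit Defensive.
Import Order.TTheory.
Local Open Scope order_scope.
Local Open Scope fset_scope.

(* A finite union A of closed intervals has finitely many maximal components,
   and each of them has a least element (a left endpoint) and, unless it is
   unbounded above, a greatest one (a right endpoint): these are extreme
   endpoints of the finitely many intervals meeting the component.  Hence i
   lies in A iff some left endpoint l <= i is followed by no right endpoint in
   [l, i).  This is first-order in W(I): a nonempty X with min (X u {i}) = X is
   a singleton {l} with l <= i, and min ({i} u Y) = {i} says that i lies below
   every element of Y. *)

Section Components.
Context {d : Order.disp_t} {T : orderType d}.
Implicit Types (A C K : T -> Prop) (J : @cinterval d T).

Lemma cinterval_convex J : convex_set (cinterval_mem J).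
Proof.
case: J => [a b|a|b] x y z /=.
- by move=> [ax _] [_ yb] xz zy; split; [apply: le_trans xz | apply: le_trans yb].
- by move=> ax _ xz _; apply: le_trans xz.
- by move=> _ yb _ zy; apply: le_trans yb.
Qed.

(* The union of C and K is convex since they share the point x. *)
Lemma max_component_absorb A C K x :
  max_component A C -> convex_set K -> (forall y, K y -> A y) -> C x -> K x ->
  forall y, K y -> C y.
Proof.
case=> _ CA convC maxC convK KA Cx Kx y Ky.
apply: (maxC (fun z => C z \/ K z)) => [z|z [/CA|/KA] //||]; [by left | | by right].
move=> a b c [Ca|Ka] [Cb|Kb] ac cb.
- by left; apply: convC Ca Cb ac cb.
- case: (leP c x) => cx; first by left; apply: convC Ca Cx ac cx.
  by right; apply: convK Kx Kb (ltW cx) cb.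
- case: (leP c x) => cx; first by right; apply: convK Ka Kx ac cx.
  by left; apply: convC Cx Cb (ltW cx) cb.
- by right; apply: convK Ka Kb ac cb.
Qed.

Definition between (u v y : T) : Prop := (u <= y <= v) \/ (v <= y <= u).

Definition component A i (y : T) : Prop := forall z, between y i z -> A z.

Lemma component_refl A i : A i -> component A i i.
Proof.
by move=> Ai z [/andP[iz zi]|/andP[iz zi]]; rewrite (@le_anti _ _ z i) ?iz ?zi.
Qed.

Lemma component_sub A i y : component A i y -> A y.
Proof.
move=> Cy; apply: Cy.
by case: (leP y i) => [yi|/ltW iy]; [left|right]; rewrite lexx ?yi ?iy.
Qed.

Lemma component_convex A i : convex_set (component A i).
Proof.
move=> a b c Ca Cb ac cb z [/andP[cz zi]|/andP[iz zc]].
- by apply: Ca; left; rewrite (le_trans ac cz) zi.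
- by apply: Cb; right; rewrite iz (le_trans zc cb).
Qed.

Lemma component_max_component A i : A i -> max_component A (component A i).
Proof.
move=> Ai; have Ci := component_refl Ai; split.
- by exists i.
- by move=> y /component_sub.
- exact: component_convex.
- move=> C' CC' C'A convC' y C'y z [/andP[yz zi]|/andP[iz zy]]; apply: C'A.
  + exact: convC' C'y (CC' _ Ci) yz zi.
  + exact: convC' (CC' _ Ci) C'y iz zy.
Qed.

Lemma in_list_arg_min (R : rel T) (f : cinterval -> T) (Q : cinterval -> Prop) s :
  total R -> transitive R -> (exists2 J, in_list J s & Q J) ->
  exists J, [/\ in_list J s, Q J & forall J', in_list J' s -> Q J' -> R (f J) (f J')].
Proof.
move=> totR trR; have Rxx x : R x x by case/orP: (totR x x).
elim: s => [[J []]|K s IH] //= exQ.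
case: (classic (exists2 J, in_list J s & Q J)) => [/IH [J0 [J0s QJ0 minJ0]]|noQ].
- case: (classic (Q K /\ R (f K) (f J0))) => [[QK KJ0]|notK].
  + exists K; split; [by left | done |].
    by move=> J' [->|J's] QJ' //; apply: trR KJ0 (minJ0 J' J's QJ').
  + exists J0; split; [by right | done |].
    move=> J' [->|J's] QJ'; last exact: minJ0.
    by case/orP: (totR (f J0) (f K)) => // KJ0; case: notK.
- case: exQ => J [->|Js] QJ; last by case: noQ; exists J.
  exists K; split; [by left | done |].
  by move=> J' [->|J's] QJ' //; case: noQ; exists J'.
Qed.

Section FiniteUnion.
Variables (zero : T) (zero_min : forall x : T, zero <= x).
Variables (A : T -> Prop) (s : seq (@cinterval d T)).
Hypothesis A_def : forall x, A x <-> exists2 J, in_list J s & cinterval_mem J x.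

Definition cinterval_min J : T :=
  match J with CBnd a _ | CRayR a => a | CRayL _ => zero end.

(* The value on [a, +oo) is junk. *)
Definition cinterval_max J : T :=
  match J with CBnd _ b | CRayL b => b | CRayR a => a end.

Lemma cinterval_minP J x : cinterval_mem J x ->
  cinterval_mem J (cinterval_min J) /\ forall y, cinterval_mem J y -> cinterval_min J <= y.
Proof.
case: J => [a b|a|b] /=.
- by move=> [ax xb]; split=> [|y [] //]; rewrite lexx (le_trans ax xb).
- by split.
- by split=> [|y _]; rewrite ?zero_min.
Qed.

Lemma cinterval_maxP J x : (forall a, J <> CRayR a) -> cinterval_mem J x ->
  cinterval_mem J (cinterval_max J) /\ forall y, cinterval_mem J y -> y <= cinterval_max J.
Proof.
case: J => [a b|a|b] /= notRay.
- by move=> [ax xb]; split=> [|y [] //]; rewrite lexx (le_trans ax xb).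
- by case: (notRay a).
- by split.
Qed.

Lemma max_component_extremum (R : rel T) (e : cinterval -> T) C :
  total R -> transitive R -> max_component A C ->
  (forall J x, in_list J s -> C x -> cinterval_mem J x ->
     cinterval_mem J (e J) /\ forall y, cinterval_mem J y -> R (e J) y) ->
  exists m, C m /\ forall y, C y -> R m y.
Proof.
move=> totR trR maxC endP; have [[x0 Cx0] CA _ _] := maxC.
pose Q J := exists2 x, C x & cinterval_mem J x.
have QC J : in_list J s -> Q J -> forall y, cinterval_mem J y -> C y.
  move=> Js [x Cx Jx]; apply: max_component_absorb maxC (@cinterval_convex J) _ Cx Jx.
  by move=> y Jy; apply/A_def; exists J.
have exQ : exists2 J, in_list J s & Q J.
  by case/A_def: (CA x0 Cx0) => J Js Jx0; exists J => //; exists x0.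
have [J0 [J0s QJ0 minJ0]] := in_list_arg_min e totR trR exQ.
have [x Cx J0x] := QJ0; have [J0e _] := endP J0 x J0s Cx J0x.
exists (e J0); split; first exact: QC J0 J0s QJ0 _ J0e.
move=> y Cy; case/A_def: (CA y Cy) => J Js Jy; have [_ eJ] := endP J y Js Cy Jy.
by apply: trR (minJ0 J Js _) (eJ y Jy); exists y.
Qed.

Lemma max_component_has_min C :
  max_component A C -> exists l, C l /\ forall y, C y -> l <= y.
Proof.
move=> maxC; apply: (max_component_extremum (e := cinterval_min) le_total le_trans maxC).
by move=> J x _ _; apply: cinterval_minP.
Qed.

Lemma max_component_has_max C u : max_component A C -> (forall y, C y -> y < u) ->
  exists r, C r /\ forall y, C y -> y <= r.
Proof.
move=> maxC ltCu.
have geT : transitive (fun a b : T => b <= a) by move=> b a c ba cb; apply: le_trans cb ba.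
apply: (max_component_extremum (e := cinterval_max) (fun a b => le_total b a) geT maxC).
move=> J x Js Cx Jx; apply: (cinterval_maxP _ Jx) => a Ja; subst J.
have rayC : forall y, cinterval_mem (CRayR a) y -> C y.
  apply: max_component_absorb maxC (@cinterval_convex (CRayR a)) _ Cx Jx.
  by move=> y ay; apply/A_def; exists (CRayR a).
have ax : a <= x := Jx.
by have := ltCu u (rayC u (ltW (le_lt_trans ax (ltCu x Cx)))); rewrite ltxx.
Qed.

Lemma fci_memP i : A i <-> exists l,
  [/\ left_endpoint A l, l <= i & forall r, right_endpoint A r -> l <= r -> i <= r].
Proof.
split=> [Ai | [l [[C [maxC Cl minC]] li maxR]]].
- have maxC := component_max_component Ai; have Ci := component_refl Ai.
  have [l [Cl minC]] := max_component_has_min maxC.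
  exists l; split; [by exists (component A i) | exact: minC |].
  move=> r [C' [maxC' C'r maxC'r]] lr.
  case: (leP i r) => // ri.
  have Cr : component A i r := component_convex Cl Ci lr (ltW ri).
  have C'i := max_component_absorb maxC' (@component_convex A i) (@component_sub A i)
    C'r Cr Ci.
  by have := maxC'r i C'i; rewrite leNgt ri.
- have [_ CA convC _] := maxC; apply: CA; apply: NNPP => notCi.
  have ltCi y : C y -> y < i.
    by move=> Cy; rewrite ltNge; apply/negP => iy; apply: notCi (convC _ _ _ Cl Cy li iy).
  have [r [Cr maxCr]] := max_component_has_max maxC ltCi.
  have ir : i <= r by apply: maxR (minC r Cr); exists C.
  by have := ltCi r Cr; rewrite ltNge ir.
Qed.

End FiniteUnion.
End Components.

Section MinOfUnion.
Context {d : Order.disp_t} {T : orderType d}.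
Implicit Types (X Y : {fset T}).

Lemma wmin_fset1U (a : T) Y : wmin (a |` Y) = [fset a] <-> forall y, y \in Y -> a <= y.
Proof.
split=> [minaY y yY | leaY].
- have : a \in wmin (a |` Y) by rewrite minaY fset11.
  by rewrite inE => /andP[_ /allP]; apply; rewrite fset1Ur.
apply/fsetP => x; rewrite !inE; case: (eqVneq x a) => [->|xa] /=.
  by apply/allP => y /fset1UP[->|/leaY].
apply/negbTE/negP => /andP[xY /allP lexY].
by move/eqP: xa; apply; apply: le_anti; rewrite leaY // lexY // fset1U1.
Qed.

Lemma wmin_fsetU_fixed X Y : X != fset0 -> wmin (X `|` Y) = X -> exists l, X = [fset l].
Proof.
move=> /fset0Pn[x xX] minXY.
have leX y z : y \in X -> z \in X -> y <= z.
  by move=> yX zX; move: yX; rewrite -minXY inE => /andP[_ /allP]; apply; rewrite inE zX.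
exists x; apply/fsetP => y; rewrite inE; apply/idP/eqP => [yX|->//].
by apply: le_anti; rewrite !leX.
Qed.

End MinOfUnion.

(* With X_l, X_r, Z the variables 0, 1, 2, this reads
   exists X, X <> bot /\ X cap X_l = X /\ min (X cup Z) = X /\
     forall Y, (Y cap X_r = Y /\ min (X cup Y) = X) -> min (Z cup Y) = Z. *)
Definition phi_mem : wform :=
  FEx 3 (FAnd (FNot (FEq (TVar 3) TBot))
         (FAnd (FEq (TCap (TVar 3) (TVar 0)) (TVar 3))
         (FAnd (FEq (TMin (TCup (TVar 3) (TVar 2))) (TVar 3))
               (FAll 4 (FImp (FAnd (FEq (TCap (TVar 4) (TVar 1)) (TVar 4))
                                   (FEq (TMin (TCup (TVar 3) (TVar 4))) (TVar 3)))
                             (FEq (TMin (TCup (TVar 2) (TVar 4))) (TVar 2))))))).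

Lemma wsat_phi_mem (d : Order.disp_t) (T : orderType d) (zero i : T) (L R : {fset T}) :
  wsat zero (env3 L R [fset i]) phi_mem <->
  exists l, [/\ l \in L, l <= i & forall r, r \in R -> l <= r -> i <= r].
Proof.
rewrite /= /upd /=; split.
- move=> [X [/eqP X0 [/fsetIidPl XL [minXi minY]]]].
  have [l Xl] := wmin_fsetU_fixed X0 minXi; subst X.
  exists l; split.
  + by apply: (fsubsetP XL); rewrite fset11.
  + by move/wmin_fset1U: minXi; apply; rewrite fset11.
  move=> r rR lr; suff /wmin_fset1U: wmin (i |` [fset r]) = [fset i] by apply; rewrite fset11.
  apply: minY; split; first by apply/fsetIidPl; rewrite fsub1set.
  by apply/wmin_fset1U => y /fset1P->.
- move=> [l [lL li maxR]]; exists [fset l]; split; last split; last split.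
  + by move/fsetP/(_ l); rewrite !inE eqxx.
  + by apply/fsetIidPl; rewrite fsub1set.
  + by apply/wmin_fset1U => y /fset1P->.
  move=> Y [/fsetIidPl YR /wmin_fset1U lY]; apply/wmin_fset1U => y yY.
  exact: maxR (fsubsetP YR y yY) (lY y yY).
Qed.

Theorem lemma6p2 (d : Order.disp_t) (T : orderType d) (zero : T)
  (zero_min : forall x : T, zero <= x)
  (dense : forall x y : T, x < y -> exists z : T, x < z /\ z < y)
  (no_right_end : forall x : T, exists y : T, x < y) :
  exists phi : wform,
    form_fv_in (fun n => n < 3)%N phi /\
    forall (i : T) (A : T -> Prop), is_fci A ->
      forall L R : {fset T},
        (forall x, x \in L <-> left_endpoint A x) ->
        (forall x, x \in R <-> right_endpoint A x) ->
        (A i <-> wsat zero (env3 L R [fset i]) phi).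
Proof.
exists phi_mem; split=> // i A [s A_def] L R memL memR.
apply: iff_trans (fci_memP zero_min A_def i) _; apply: iff_sym.
apply: iff_trans (wsat_phi_mem zero i L R) _.
split=> -[l [lL li maxR]]; exists l; split=> // [|r /memR];
  by [apply/memL | apply: maxR].
Qed.
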